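(* Let $s$ be a fixed state, let $N\ge 1$, let $a_1(s),\dots,a_N(s)\in\mathbb{R}$ be centroids and $v_1(s),\dots,v_N(s)\in\mathbb{R}$ be values, and let $\beta>0$. Define, for $a\in\mathbb{R}$, $$\widehat Q_\beta(s,a)=\frac{\sum_{i=1}^N e^{-\beta|a-a_i(s)|}\,v_i(s)}{\sum_{i=1}^N e^{-\beta|a-a_i(s)|}}.$$ Then the supremum of $\widehat Q_\beta(s,\cdot)$ over the one-dimensional action space $\mathcal{A}=\mathbb{R}$ is attained at one of the centroids: $$\max_{a\in\mathbb{R}}\widehat Q_\beta(s,a)=\max_{i\in\{1,\dots,N\}}\widehat Q_\beta(s,a_i(s)).$$
   Context: A normalized (Gaussian) RBF value function, for a fixed state $s$, is a function of actions $a$ of the form $\widehat Q_\beta(s,a;\theta)=\frac{\sum_{i=1}^N e^{-\beta\|a-a_i(s;\theta)\|}v_i(s;\theta)}{\sum_{i=1}^N e^{-\beta\|a-a_i(s;\theta)\|}}$, where the centroids $a_i(s;\theta)$ and values $v_i(s;\theta)$ are outputs of a parametrized network (here treated as arbitrary fixed numbers for the fixed state $s$), and $\beta>0$ is a smoothing parameter. *)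

From Stdlib Require Import Reals.
Open Scope R_scope.

(* Centroids a_i and values v_i are indexed by i = 0, ..., N-1
   (functions nat -> R, only the first N entries matter).
   weight beta c x i = exp(-beta * |x - c i|). *)
Definition rbf_weight (beta : R) (c : nat -> R) (x : R) (i : nat) : R :=
  exp (- beta * Rabs (x - c i)).

Fixpoint fsum (N : nat) (f : nat -> R) : R :=
  match N with
  | O => 0
  | S n => fsum n f + f n
  end.

Definition Qhat (beta : R) (N : nat) (c v : nat -> R) (x : R) : R :=
  fsum N (fun i => rbf_weight beta c x i * v i) / fsum N (fun i => rbf_weight beta c x i).

From Stdlib Require Import Reals Lra Lia Classical.
Open Scope R_scope.

(* Q(x) <= M amounts to F(x) := sum_i w_i(x) (v_i - M) <= 0.  On a gap [l, r] between
   consecutive centroids, every kernel exp(-beta |x - c_i|) is either exp(beta c_i) e^{-beta x}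
   or exp(-beta c_i) e^{beta x}, so e^{beta x} F(x) = A + B e^{2 beta x} is monotone there and
   bounded by its values at the centroids l and r; beyond the extreme centroids only one of
   A, B survives.  Hence F <= 0 at the centroids, for M the best centroid value, forces
   F <= 0 everywhere. *)

Lemma fsum_ext (N : nat) (f g : nat -> R) :
  (forall i, (i < N)%nat -> f i = g i) -> fsum N f = fsum N g.
Proof.
  induction N as [|N IH]; intros H; simpl; [reflexivity|].
  rewrite IH, H by (try (intros; apply H); lia); reflexivity.
Qed.

Lemma fsum_eq0 (N : nat) (f : nat -> R) :
  (forall i, (i < N)%nat -> f i = 0) -> fsum N f = 0.
Proof.
  induction N as [|N IH]; intros H; simpl; [reflexivity|].
  rewrite IH, H by (try (intros; apply H); lia); ring.
Qed.

Lemma fsum_add (N : nat) (f g : nat -> R) :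
  fsum N (fun i => f i + g i) = fsum N f + fsum N g.
Proof. induction N as [|N IH]; simpl; [ring|]. rewrite IH; ring. Qed.

Lemma fsum_sub (N : nat) (f g : nat -> R) :
  fsum N (fun i => f i - g i) = fsum N f - fsum N g.
Proof. induction N as [|N IH]; simpl; [ring|]. rewrite IH; ring. Qed.

Lemma fsum_scal_l (N : nat) (k : R) (f : nat -> R) :
  fsum N (fun i => k * f i) = k * fsum N f.
Proof. induction N as [|N IH]; simpl; [ring|]. rewrite IH; ring. Qed.

Lemma fsum_scal_r (N : nat) (k : R) (f : nat -> R) :
  fsum N (fun i => f i * k) = fsum N f * k.
Proof. induction N as [|N IH]; simpl; [ring|]. rewrite IH; ring. Qed.

Lemma fsum_gt0 (N : nat) (f : nat -> R) :
  (1 <= N)%nat -> (forall i, 0 < f i) -> 0 < fsum N f.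
Proof.
  induction N as [|[|N] IH]; intros HN Hf; simpl; [lia| |].
  - specialize (Hf 0%nat); lra.
  - specialize (IH ltac:(lia) Hf); specialize (Hf (S N)); simpl in IH; lra.
Qed.

Lemma argmax_exists (P : nat -> Prop) (g : nat -> R) (N : nat) :
  (exists j, (j < N)%nat /\ P j) ->
  exists i, (i < N)%nat /\ P i /\ forall j, (j < N)%nat -> P j -> g j <= g i.
Proof.
  induction N as [|N IH]; intros [j [Hj Pj]]; [lia|].
  destruct (classic (exists j, (j < N)%nat /\ P j)) as [Hex|Hnone].
  - destruct (IH Hex) as [i [Hi [Pi Hmax]]].
    destruct (classic (P N /\ g i <= g N)) as [[PN Hle]|Hnot].
    + exists N; repeat split; auto; intros k Hk Pk.
      destruct (Nat.eq_dec k N) as [->|Hne]; [lra|].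
      specialize (Hmax k ltac:(lia) Pk); lra.
    + exists i; repeat split; auto; intros k Hk Pk.
      destruct (Nat.eq_dec k N) as [->|Hne]; [|apply Hmax; auto; lia].
      destruct (Rle_dec (g N) (g i)); auto.
      exfalso; apply Hnot; split; auto; lra.
  - assert (Hall : forall k, (k < S N)%nat -> P k -> k = N).
    { intros k Hk Pk; destruct (Nat.eq_dec k N); auto.
      exfalso; apply Hnone; exists k; split; auto; lia. }
    pose proof (Hall j Hj Pj); subst j.
    exists N; repeat split; auto.
    intros k Hk Pk; rewrite (Hall k Hk Pk); lra.
Qed.

Lemma div_le_iff_sub_mul (S D M : R) : 0 < D -> S / D <= M <-> S - M * D <= 0.
Proof.
  intros HD; unfold Rdiv; split; intros H.
  - apply Rmult_le_compat_r with (r := D) in H; [|lra].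
    rewrite Rmult_assoc, Rinv_l in H by lra; lra.
  - assert (S <= M * D) by lra.
    apply Rmult_le_compat_r with (r := / D) in H0; [|left; apply Rinv_0_lt_compat; lra].
    rewrite Rmult_assoc, Rinv_r, Rmult_1_r in H0 by lra; exact H0.
Qed.

(* If one of the coefficients vanishes, one-sided control is enough. *)
Lemma affine_monotone_nonpos (h : R -> R) (A B x : R) :
  (forall y z, y <= z -> h y <= h z) -> (forall y, 0 < h y) ->
  (exists l, l <= x /\ A + B * h l <= 0) \/ A = 0 ->
  (exists r, x <= r /\ A + B * h r <= 0) \/ B = 0 ->
  A + B * h x <= 0.
Proof.
  intros Hmono Hpos [[l [Hlx Hl]]|HA] [[r [Hxr Hr]]|HB].
  - pose proof (Hmono l x Hlx); pose proof (Hmono x r Hxr).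
    destruct (Rle_dec 0 B); nra.
  - subst B; lra.
  - pose proof (Hpos r); pose proof (Hpos x); subst A; nra.
  - subst; lra.
Qed.

Lemma exp_le_compat (a b : R) : a <= b -> exp a <= exp b.
Proof. intros [H| ->]; [left; apply exp_increasing; exact H | lra]. Qed.

Lemma rbf_weight_right (beta : R) (c : nat -> R) (y : R) (i : nat) :
  c i <= y -> exp (beta * y) * rbf_weight beta c y i = exp (beta * c i).
Proof.
  intros H; unfold rbf_weight; rewrite Rabs_pos_eq, <- exp_plus by lra.
  f_equal; ring.
Qed.

Lemma rbf_weight_left (beta : R) (c : nat -> R) (y : R) (i : nat) :
  y <= c i -> exp (beta * y) * rbf_weight beta c y i = exp (- beta * c i) * exp (2 * beta * y).
Proof.
  intros H; unfold rbf_weight; rewrite Rabs_left1, <- !exp_plus by lra.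
  f_equal; ring.
Qed.

Section RBFSum.

Variables (N : nat) (c : nat -> R) (beta : R).
Hypothesis hbeta : 0 <= beta.

Definition rbf_sum (u : nat -> R) (y : R) : R :=
  fsum N (fun i => rbf_weight beta c y i * u i).

Lemma Qhat_le_iff (v : nat -> R) (M y : R) :
  (1 <= N)%nat -> Qhat beta N c v y <= M <-> rbf_sum (fun i => v i - M) y <= 0.
Proof.
  intros HN; unfold Qhat, rbf_sum.
  assert (Hsplit : fsum N (fun i => rbf_weight beta c y i * (v i - M)) =
            fsum N (fun i => rbf_weight beta c y i * v i) - M * fsum N (fun i => rbf_weight beta c y i)).
  { rewrite <- fsum_scal_l, <- fsum_sub; apply fsum_ext; intros; cbv beta; ring. }
  rewrite Hsplit; apply div_le_iff_sub_mul, fsum_gt0; auto.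
  intros; apply exp_pos.
Qed.

Section Gap.

Variables (u : nat -> R) (x : R).

Definition left_coef : R :=
  fsum N (fun i => if Rle_dec (c i) x then exp (beta * c i) * u i else 0).

Definition right_coef : R :=
  fsum N (fun i => if Rle_dec (c i) x then 0 else exp (- beta * c i) * u i).

(* No centroid separates y from x (up to ties at the left end). *)
Definition in_gap (y : R) : Prop :=
  forall i, (i < N)%nat -> (c i <= x -> c i <= y) /\ (x < c i -> y <= c i).

Lemma rbf_sum_in_gap (y : R) :
  in_gap y -> exp (beta * y) * rbf_sum u y = left_coef + right_coef * exp (2 * beta * y).
Proof.
  intros Hgap; unfold rbf_sum, left_coef, right_coef.
  rewrite <- fsum_scal_l, <- fsum_scal_r, <- fsum_add.
  apply fsum_ext; intros i Hi; destruct (Hgap i Hi) as [Hl Hr].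
  destruct (Rle_dec (c i) x) as [Hc|Hc].
  - rewrite <- Rmult_assoc, rbf_weight_right by auto; ring.
  - rewrite <- Rmult_assoc, rbf_weight_left by (apply Hr; lra); ring.
Qed.

Lemma in_gap_self : in_gap x.
Proof. intros i _; split; lra. Qed.

End Gap.

Lemma rbf_sum_nonpos (u : nat -> R) :
  (forall j, (j < N)%nat -> rbf_sum u (c j) <= 0) -> forall x, rbf_sum u x <= 0.
Proof.
  intros Hc x.
  assert (Hcentroid : forall j, (j < N)%nat -> in_gap x (c j) ->
            left_coef u x + right_coef u x * exp (2 * beta * c j) <= 0).
  { intros j Hj Hgap; rewrite <- rbf_sum_in_gap by exact Hgap.
    pose proof (exp_pos (beta * c j)); pose proof (Hc j Hj); nra. }
  assert (Hx : exp (beta * x) * rbf_sum u x <= 0).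
  { rewrite (rbf_sum_in_gap u x x (in_gap_self x)).
    apply (affine_monotone_nonpos (fun y => exp (2 * beta * y))).
    - intros y z Hyz; apply exp_le_compat; nra.
    - intros; apply exp_pos.
    - destruct (classic (exists j, (j < N)%nat /\ c j <= x)) as [Hex|Hnone].
      + left; destruct (argmax_exists _ c N Hex) as [l [Hl [Hlx Hmax]]].
        exists (c l); split; auto; apply Hcentroid; auto.
        intros i Hi; split; [apply Hmax; auto | lra].
      + right; apply fsum_eq0; intros i Hi.
        destruct (Rle_dec (c i) x); auto.
        exfalso; apply Hnone; exists i; auto.
    - destruct (classic (exists j, (j < N)%nat /\ x < c j)) as [Hex|Hnone].
      + left; destruct (argmax_exists _ (fun j => - c j) N Hex) as [r [Hr [Hxr Hmin]]].
        exists (c r); split; [lra|]; apply Hcentroid; auto.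
        intros i Hi; split; [lra|]; intros Hxi; specialize (Hmin i Hi Hxi); lra.
      + right; apply fsum_eq0; intros i Hi.
        destruct (Rle_dec (c i) x); auto.
        exfalso; apply Hnone; exists i; split; auto; lra. }
  pose proof (exp_pos (beta * x)); nra.
Qed.

End RBFSum.

Theorem theorem1 (N : nat) (c v : nat -> R) (beta : R)
  (hN : (1 <= N)%nat) (hbeta : 0 < beta) :
  exists i : nat, (i < N)%nat /\
    (forall j : nat, (j < N)%nat -> Qhat beta N c v (c j) <= Qhat beta N c v (c i)) /\
    (forall x : R, Qhat beta N c v x <= Qhat beta N c v (c i)).
Proof.
  destruct (argmax_exists (fun _ => True) (fun j => Qhat beta N c v (c j)) N)
    as [i [Hi [_ Hmax]]].
  { exists 0%nat; split; auto; lia. }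
  exists i; split; [exact Hi|split].
  - intros j Hj; apply Hmax; auto.
  - intros x; apply Qhat_le_iff; auto.
    apply rbf_sum_nonpos; [lra|].
    intros j Hj; apply Qhat_le_iff; auto.
Qed.
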